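(* Let $(\mathbf{x}^1,y_l^1,y_r^1),\dots,(\mathbf{x}^T,y_l^T,y_r^T)$ be a sequence of examples with $\mathbf{x}^t\in\mathbb{R}^d$ and integers $1\le y_l^t\le y_r^t\le K$, and run PA-II with parameter $C>0$ starting from $\mathbf{w}^1=\mathbf{0}$, $\boldsymbol\theta^1=\mathbf{0}$. Let $\mathbf{v}^*=(\mathbf{u}^*,\mathbf{b}^* )$, $\mathbf{u}^*\in\mathbb{R}^d$, $\mathbf{b}^*\in\mathbb{R}^{K-1}$, be an ideal predictor: $\mathbf{u}^*\cdot\mathbf{x}^t-b_i^*\ge1$ for all $i\in\{1,\dots,y_l^t-1\}$, $t\in[T]$, and $\mathbf{u}^*\cdot\mathbf{x}^t-b_i^*\le-1$ for all $i\in\{y_r^t,\dots,K-1\}$, $t\in[T]$. Let $c=\min_{t\in[T]}(y_r^t-y_l^t)$ and $R^2=\max_{t\in[T]}\Vert\mathbf{x}^t\Vert^2$. Then $$\sum_{t=1}^T\sum_{i=1}^{K-1}(l_i^t)^2\le\left(1+\frac{1}{2C}+R^2(K-c-1)\right)\Vert\mathbf{v}^*\Vert^2,$$ where $\Vert\mathbf{v}^*\Vert^2=\Vert\mathbf{u}^*\Vert^2+\Vert\mathbf{b}^*\Vert^2$.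
   Context: PA-II algorithm with parameter $C>0$: at trial $t$, with $I_t=\{1,\dots,y_l^t-1\}\cup\{y_r^t,\dots,K-1\}$, $(\mathbf{w}^{t+1},\boldsymbol\theta^{t+1})$ is the $(\mathbf{w},\boldsymbol\theta)$-part of the minimizer over $\mathbf{w},\boldsymbol\theta,(\xi_i)_{i\in I_t}$ of $\tfrac12\Vert\mathbf{w}-\mathbf{w}^t\Vert^2+\tfrac12\Vert\boldsymbol\theta-\boldsymbol\theta^t\Vert^2+C\sum_{i\in I_t}\xi_i^2$ subject to $\mathbf{w}\cdot\mathbf{x}^t-\theta_i\ge1-\xi_i$ ($i\le y_l^t-1$) and $\mathbf{w}\cdot\mathbf{x}^t-\theta_i\le-1+\xi_i$ ($i\ge y_r^t$). Losses: $l_i^t=\max(0,1+\theta_i^t-\mathbf{w}^t\cdot\mathbf{x}^t)$ for $1\le i\le y_l^t-1$, $l_i^t=\max(0,1+\mathbf{w}^t\cdot\mathbf{x}^t-\theta_i^t)$ for $y_r^t\le i\le K-1$, $l_i^t=0$ otherwise. *)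

From HB Require Import structures.
From mathcomp Require Import all_boot all_order all_algebra.
From mathcomp Require Import reals.
Set Implicit Arguments. Unset Strict Implicit. Unset Printing Implicit Defensive.
Import Order.TTheory GRing.Theory Num.Theory.
Local Open Scope ring_scope.

(* Vectors in R^n are row vectors 'rV[R]_n.  Thresholds theta_1..theta_{K-1}
   are stored in 'rV[R]_(K.-1); the coordinate j : 'I_(K.-1) is theta_{j+1}. *)

Definition dot (R : realType) n (u v : 'rV[R]_n) : R := \sum_(i < n) u 0 i * v 0 i.
Definition sqn (R : realType) n (u : 'rV[R]_n) : R := dot u u.

Definition inI (n yl yr : nat) (j : 'I_n) : bool := (j.+1 < yl)%N || (yr <= j.+1)%N.

Definition pa2_feasible (R : realType) d n (x : 'rV[R]_d) (yl yr : nat)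
  (w : 'rV[R]_d) (th xi : 'rV[R]_n) : Prop :=
  forall j : 'I_n,
    ((j.+1 < yl)%N -> 1 - xi 0 j <= dot w x - th 0 j) /\
    ((yr <= j.+1)%N -> dot w x - th 0 j <= -1 + xi 0 j).

Definition pa2_obj (R : realType) d n (C : R) (yl yr : nat)
  (w0 : 'rV[R]_d) (th0 : 'rV[R]_n) (w : 'rV[R]_d) (th xi : 'rV[R]_n) : R :=
  2^-1 * sqn (w - w0) + 2^-1 * sqn (th - th0)
  + C * \sum_(j < n | inI yl yr j) xi 0 j ^+ 2.

Definition pa2_step (R : realType) d n (C : R) (x : 'rV[R]_d) (yl yr : nat)
  (w0 : 'rV[R]_d) (th0 : 'rV[R]_n) (w1 : 'rV[R]_d) (th1 : 'rV[R]_n) : Prop :=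
  exists xi : 'rV[R]_n,
    pa2_feasible x yl yr w1 th1 xi /\
    forall (w : 'rV[R]_d) (th xi' : 'rV[R]_n),
      pa2_feasible x yl yr w th xi' ->
      pa2_obj C yl yr w0 th0 w1 th1 xi <= pa2_obj C yl yr w0 th0 w th xi'.

Definition pa_loss (R : realType) d n (w : 'rV[R]_d) (th : 'rV[R]_n)
  (x : 'rV[R]_d) (yl yr : nat) (j : 'I_n) : R :=
  if (j.+1 < yl)%N then Num.max 0 (1 + th 0 j - dot w x)
  else if (yr <= j.+1)%N then Num.max 0 (1 + dot w x - th 0 j)
  else 0.

From HB Require Import structures.
From mathcomp Require Import all_boot all_order all_algebra.
From mathcomp Require Import reals.
From mathcomp Require Import zify ring lra.
Import Order.TTheory GRing.Theory Num.Theory.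
Local Open Scope ring_scope.
Set Implicit Arguments. Unset Strict Implicit.

(* Write v = (w, theta).  The ideal point (u*, b*, xi = 0) is feasible for every
   PA-II problem, and the feasible set is convex, so first-order optimality of
   the minimizer along the segment towards it gives
     |v^{t+1} - v^t|^2 + 2C sum_i xi_i^2 <= |v^t - v*|^2 - |v^{t+1} - v*|^2;
   these per-step costs therefore telescope to at most |v*|^2.  Conversely,
   feasibility of the new iterate bounds each loss l_i^t by the signed change
   of the margin plus the slack xi_i, and AM-GM with weight
   M_t = 1 + 1/(2C) + |x^t|^2 |I_t| bounds sum_i (l_i^t)^2 by M_t times the
   per-step cost.  Finally |I_t| = K - 1 - (y_r^t - y_l^t) <= K - c - 1. *)

Section DotProduct.
Variables (R : realType) (n : nat).
Implicit Types (u v w : 'rV[R]_n) (a : R).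

Lemma dotC u v : dot u v = dot v u.
Proof. by apply: eq_bigr => i _; rewrite mulrC. Qed.

Lemma dotDl u v w : dot (u + v) w = dot u w + dot v w.
Proof. by rewrite /dot -big_split; apply: eq_bigr => i _; rewrite mxE mulrDl. Qed.

Lemma dotNl u v : dot (- u) v = - dot u v.
Proof. by rewrite /dot -sumrN; apply: eq_bigr => i _; rewrite mxE mulNr. Qed.

Lemma dotBl u v w : dot (u - v) w = dot u w - dot v w.
Proof. by rewrite dotDl dotNl. Qed.

Lemma dotZl a u v : dot (a *: u) v = a * dot u v.
Proof. by rewrite /dot mulr_sumr; apply: eq_bigr => i _; rewrite mxE mulrA. Qed.

Lemma dotZr a u v : dot u (a *: v) = a * dot u v.
Proof. by rewrite dotC dotZl dotC. Qed.

Lemma sqn_ge0 u : 0 <= sqn u.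
Proof. by apply: sumr_ge0 => i _; rewrite -expr2 sqr_ge0. Qed.

Lemma sqnN u : sqn (- u) = sqn u.
Proof. by rewrite /sqn dotNl dotC dotNl opprK. Qed.

Lemma sqnZ a u : sqn (a *: u) = a ^+ 2 * sqn u.
Proof. by rewrite /sqn dotZl dotZr mulrA -expr2. Qed.

Lemma sqnD u v : sqn (u + v) = sqn u + 2 * dot u v + sqn v.
Proof. by rewrite /sqn !dotDl !(dotC _ (u + v)) !dotDl (dotC v u); ring. Qed.

Lemma dot_le_sqnD u v : 2 * dot u v <= sqn u + sqn v.
Proof.
have := sqn_ge0 (u - v); rewrite sqnD sqnN dotC dotNl dotC; lra.
Qed.

Lemma sqnB_mid u v w : sqn (u - w) = sqn (v - u) + 2 * dot (v - u) (w - v) + sqn (v - w).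
Proof.
have -> : u - w = - ((v - u) + (w - v)) by rewrite [(v - u) + _]addrC addrA subrK opprB.
by rewrite sqnN sqnD -(sqnN (w - v)) opprB.
Qed.

End DotProduct.

Lemma mulr2_le_sqr_weighted (R : realFieldType) (k a b : R) :
  0 < k -> 2 * (a * b) <= a ^+ 2 / k + k * b ^+ 2.
Proof.
move=> k_gt0; have : 0 <= (a - k * b) ^+ 2 / k by rewrite divr_ge0 ?sqr_ge0 ?ltW.
have -> : (a - k * b) ^+ 2 / k = a ^+ 2 / k + k * b ^+ 2 - 2 * (a * b).
  by field; rewrite gt_eqF.
by rewrite subr_ge0.
Qed.

Lemma sqr_sum_le_card (R : realDomainType) (I : finType) (P : {pred I}) (F : I -> R) :
  (\sum_(i in P) F i) ^+ 2 <= #|P|%:R * \sum_(i in P) F i ^+ 2.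
Proof.
have double : #|P|%:R * \sum_(i in P) F i ^+ 2 = \sum_(i in P) \sum_(j in P) F j ^+ 2.
  by rewrite sumr_const mulr_natl.
rewrite double; suff : 2 * (\sum_(i in P) F i) ^+ 2 <=
  \sum_(i in P) \sum_(j in P) F j ^+ 2 + \sum_(i in P) \sum_(j in P) F j ^+ 2 by lra.
rewrite [X in _ <= _ + X]exchange_big /= expr2 mulr_suml mulr_sumr -big_split.
apply: ler_sum => i Pi; rewrite mulr_sumr mulr_sumr -big_split; apply: ler_sum => j Pj /=.
by have := sqr_ge0 (F i - F j); nra.
Qed.

Lemma sqr_max0_le (R : realDomainType) (a r : R) :
  a <= r -> Num.max 0 a ^+ 2 <= Num.max 0 a * r.
Proof.
move=> a_le_r; rewrite expr2; case: (leP 0 a) => [a_ge0|_]; last by rewrite !mul0r.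
exact: ler_wpM2l.
Qed.

Lemma ge0_of_ge0_perturbed (R : realFieldType) (G H : R) :
  0 <= H -> (forall e, 0 < e <= 1 -> 0 <= G + e * H) -> 0 <= G.
Proof.
move=> H_ge0 perturbed; rewrite leNgt; apply/negP => G_lt0.
have HG_gt0 : 0 < H - G by lra.
pose e := - G / (H - G).
have e_gt0 : 0 < e by rewrite divr_gt0 ?oppr_gt0.
have e_le1 : e <= 1 by rewrite ler_pdivrMr // mul1r; lra.
have := perturbed e; rewrite e_gt0 e_le1 => /(_ isT).
have -> : G + e * H = - (G ^+ 2 / (H - G)) by rewrite /e; field; rewrite gt_eqF.
rewrite oppr_ge0 leNgt => /negP; apply.
by rewrite divr_gt0 // exprn_even_gt0 // ltr0_neq0.
Qed.

Section Counting.
Local Open Scope nat_scope.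

Lemma card_inI n yl yr : 0 < yl <= yr -> yr <= n.+1 ->
  #|[pred j : 'I_n | inI yl yr j]| = n - (yr - yl).
Proof.
move=> /andP[yl_gt0 yl_le_yr] yr_le.
pose P i := (i.+1 < yl) || (yr <= i.+1).
have -> : #|[pred j : 'I_n | inI yl yr j]| = count P (iota 0 n).
  rewrite cardE /enum_mem size_filter -enumT -val_enum_ord count_map.
  by apply: eq_count.
have -> : n = yl.-1 + (yr - yl) + (n - yr.-1) by lia.
rewrite !iotaD !count_cat add0n.
have count_lo : count P (iota 0 yl.-1) = yl.-1.
  apply/eqP; rewrite -[X in _ == X](size_iota 0) -all_count.
  by apply/allP => i; rewrite mem_iota /P; lia.
have count_mid : count P (iota yl.-1 (yr - yl)) = 0.
  apply/eqP; rewrite -leqn0 leqNgt -has_count.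
  by apply/hasPn => i; rewrite mem_iota /P; lia.
have count_hi : count P (iota (yl.-1 + (yr - yl)) (n - yr.-1)) = n - yr.-1.
  apply/eqP; rewrite -[X in _ == X](size_iota (yl.-1 + (yr - yl))) -all_count.
  by apply/allP => i; rewrite mem_iota /P; lia.
rewrite count_lo count_mid count_hi; lia.
Qed.

End Counting.

Section PassiveAggressiveStep.
Variables (R : realType) (d n : nat) (C : R) (x : 'rV[R]_d) (yl yr : nat).
Hypothesis C_gt0 : 0 < C.
Implicit Types (w : 'rV[R]_d) (th xi : 'rV[R]_n) (j : 'I_n).

Local Notation feasible := (pa2_feasible x yl yr).
Local Notation obj := (pa2_obj C yl yr).
Local Notation slack_cost xi := (\sum_(j < n | inI yl yr j) xi 0 j ^+ 2).

Definition pa2_step_const : R :=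
  1 + (2 * C)^-1 + sqn x * #|[pred j : 'I_n | inI yl yr j]|%:R.

Lemma pa2_step_const_gt0 : 0 < pa2_step_const.
Proof.
have := mulr_ge0 (sqn_ge0 x) (ler0n R #|[pred j : 'I_n | inI yl yr j]|).
by have := invr_gt0 (2 * C); rewrite mulr_gt0 // /pa2_step_const; lra.
Qed.

Lemma slack_cost_ge0 (xi : 'rV[R]_n) : 0 <= slack_cost xi.
Proof. by apply: sumr_ge0 => j _; apply: sqr_ge0. Qed.

Lemma pa2_feasible_segment (w1 w2 : 'rV[R]_d) (th1 xi1 th2 xi2 : 'rV[R]_n) e :
  feasible w1 th1 xi1 -> feasible w2 th2 xi2 -> 0 <= e <= 1 ->
  feasible (w1 + e *: (w2 - w1)) (th1 + e *: (th2 - th1)) (xi1 + e *: (xi2 - xi1)).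
Proof.
move=> f1 f2 /andP[e_ge0 e_le1] j; have [f1l f1r] := f1 j; have [f2l f2r] := f2 j.
have : 0 <= e * (1 - e) by rewrite mulr_ge0 ?subr_ge0.
rewrite dotDl dotZl dotBl !mxE; split=> hj.
- by have := f1l hj; have := f2l hj; nra.
- by have := f1r hj; have := f2r hj; nra.
Qed.

Section Optimality.
Variables (w0 w1 u : 'rV[R]_d) (th0 th1 b xi : 'rV[R]_n).
Hypotheses (feasible1 : feasible w1 th1 xi) (feasible_ideal : feasible u b 0).
Hypothesis minimal1 :
  forall w th xi', feasible w th xi' -> obj w0 th0 w1 th1 xi <= obj w0 th0 w th xi'.

(* Moving a fraction e of the way towards (u, b, 0) raises the objective by
   e * (G + e * H), where G is the difference of the two sides below. *)
Lemma pa2_step_first_order :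
  2 * C * slack_cost xi <= dot (w1 - w0) (u - w1) + dot (th1 - th0) (b - th1).
Proof.
set S := slack_cost xi; rewrite -subr_ge0.
apply: (@ge0_of_ge0_perturbed _ _ (2^-1 * sqn (u - w1) + 2^-1 * sqn (b - th1) + C * S)).
  have CS_ge0 : 0 <= C * S := mulr_ge0 (ltW C_gt0) (slack_cost_ge0 xi).
  by have := sqn_ge0 (u - w1); have := sqn_ge0 (b - th1); lra.
move=> e /andP[e_gt0 e_le1].
have := minimal1 (pa2_feasible_segment feasible1 feasible_ideal (e:=e) _).
rewrite ltW //= e_le1 => /(_ isT) improves.
have shrunk : slack_cost (xi + e *: (0 - xi)) = (1 - e) ^+ 2 * S.
  by rewrite /S mulr_sumr; apply: eq_bigr => j _; rewrite !mxE; ring.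
rewrite /pa2_obj shrunk [w1 + _ - _]addrAC [th1 + _ - _]addrAC in improves.
rewrite (sqnD (w1 - w0)) (sqnD (th1 - th0)) !dotZr !sqnZ -/S in improves.
rewrite -(pmulr_rge0 _ e_gt0); nra.
Qed.

Lemma pa2_step_dist_decrease :
  sqn (w1 - w0) + sqn (th1 - th0) + 2 * C * slack_cost xi
  <= sqn (w0 - u) + sqn (th0 - b) - (sqn (w1 - u) + sqn (th1 - b)).
Proof.
rewrite (sqnB_mid w0 w1 u) (sqnB_mid th0 th1 b).
have := pa2_step_first_order; have := mulr_ge0 (ltW C_gt0) (slack_cost_ge0 xi).
lra.
Qed.

End Optimality.

Local Notation loss w th j := (pa_loss w th x yl yr j).

(* The value -1 outside I_t is arbitrary: the loss vanishes there. *)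
Definition pa_sign (j : 'I_n) : R := if (j.+1 < yl)%N then 1 else -1.

Lemma pa_sign_sqr j : pa_sign j ^+ 2 = 1.
Proof. by rewrite /pa_sign; case: ifP; rewrite ?sqrrN expr1n. Qed.

Definition pa_signed_loss (w : 'rV[R]_d) (th : 'rV[R]_n) : 'rV[R]_n :=
  \row_j (pa_sign j * loss w th j).

Lemma pa_loss_notin w th j : ~~ inI yl yr j -> loss w th j = 0.
Proof. by rewrite /inI negb_or /pa_loss => /andP[/negbTE-> /negbTE->]. Qed.

Lemma pa_loss_sum_inI w th :
  \sum_(j < n | inI yl yr j) loss w th j ^+ 2 = \sum_(j < n) loss w th j ^+ 2.
Proof.
rewrite [RHS](bigID (inI yl yr)) /= [X in _ + X]big1 ?addr0 // => j.
by move=> /pa_loss_notin ->; rewrite expr0n.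
Qed.

Lemma sqn_signed_loss w th : sqn (pa_signed_loss w th) = \sum_(j < n) loss w th j ^+ 2.
Proof.
by apply: eq_bigr => j _; rewrite mxE -expr2 exprMn pa_sign_sqr mul1r.
Qed.

Lemma sqr_sum_signed_loss w th :
  (\sum_(j < n) pa_signed_loss w th 0 j) ^+ 2
  <= #|[pred j : 'I_n | inI yl yr j]|%:R * \sum_(j < n) loss w th j ^+ 2.
Proof.
rewrite (bigID (inI yl yr)) /= [X in _ + X]big1 ?addr0; last first.
  by move=> j /pa_loss_notin; rewrite mxE => ->; rewrite mulr0.
apply: le_trans (sqr_sum_le_card _ _) _.
rewrite -pa_loss_sum_inI ler_wpM2l //; apply: ler_sum => j _.
by rewrite mxE exprMn pa_sign_sqr mul1r.
Qed.

Section Loss.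
Variables (w0 w1 : 'rV[R]_d) (th0 th1 xi : 'rV[R]_n).
Hypothesis feasible1 : feasible w1 th1 xi.

Lemma pa_loss_sqr_le j :
  loss w0 th0 j ^+ 2
  <= loss w0 th0 j * (pa_sign j * (dot (w1 - w0) x - (th1 - th0) 0 j) + xi 0 j).
Proof.
have [margin_l margin_r] := feasible1 j.
rewrite /pa_loss /pa_sign dotBl !mxE; case: ifP => [lt_yl|_].
  by apply: sqr_max0_le; have := margin_l lt_yl; lra.
case: ifP => [le_yr|_]; last by rewrite expr0n mul0r.
by apply: sqr_max0_le; have := margin_r le_yr; lra.
Qed.

Lemma pa_loss_sum_le_margin :
  \sum_(j < n) loss w0 th0 j ^+ 2
  <= (\sum_(j < n) pa_signed_loss w0 th0 0 j) * dot (w1 - w0) x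
     - dot (pa_signed_loss w0 th0) (th1 - th0)
     + \sum_(j < n | inI yl yr j) loss w0 th0 j * xi 0 j.
Proof.
rewrite [X in _ <= _ + X]big_mkcond mulr_suml [dot _ (th1 - th0)]/dot -sumrB -big_split.
apply: ler_sum => j _.
apply: le_trans (pa_loss_sqr_le j) _; rewrite !mxE.
by case: (boolP (inI yl yr j)) => [_|/pa_loss_notin ->] /=; lra.
Qed.

(* AM-GM with weight M on each of the three terms of the margin bound; the
   three error terms then add up to exactly M * L. *)
Lemma pa_loss_sum_le :
  \sum_(j < n) loss w0 th0 j ^+ 2
  <= pa2_step_const * (sqn (w1 - w0) + sqn (th1 - th0) + 2 * C * slack_cost xi).
Proof.
set M := pa2_step_const; have M_gt0 : 0 < M := pa2_step_const_gt0.
set L := \sum_(j < n) _; set g := pa_signed_loss w0 th0; set sigma := \sum_(j < n) g 0 j.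
pose N : R := #|[pred j : 'I_n | inI yl yr j]|%:R.
have C2_gt0 : 0 < 2 * C by rewrite mulr_gt0.
have bound_w : 2 * M * (sigma * dot (w1 - w0) x) <= M ^+ 2 * sqn (w1 - w0) + sqn x * N * L.
  have := dot_le_sqnD (M *: (w1 - w0)) (sigma *: x); rewrite dotZl dotZr !sqnZ.
  have := ler_wpM2l (sqn_ge0 x) (sqr_sum_signed_loss w0 th0).
  by rewrite -/g -/sigma -/L -/N; lra.
have bound_th : 2 * M * - dot g (th1 - th0) <= M ^+ 2 * sqn (th1 - th0) + L.
  have := dot_le_sqnD (- g) (M *: (th1 - th0)).
  by rewrite dotNl dotZr sqnN sqnZ sqn_signed_loss -/L; lra.
have bound_xi : 2 * M * \sum_(j < n | inI yl yr j) loss w0 th0 j * xi 0 j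
                <= M ^+ 2 * (2 * C * slack_cost xi) + L / (2 * C).
  rewrite /L -pa_loss_sum_inI !mulr_sumr mulr_suml -big_split /=; apply: ler_sum => j _.
  by have := mulr2_le_sqr_weighted (loss w0 th0 j) (M * xi 0 j) C2_gt0; lra.
have M_L : M * L = L + L / (2 * C) + sqn x * N * L by rewrite /M /pa2_step_const; ring.
rewrite -(ler_pM2l M_gt0).
have := ler_wpM2l (ltW M_gt0) pa_loss_sum_le_margin.
by rewrite -/L -/g -/sigma; lra.
Qed.

End Loss.

Lemma pa2_step_loss_le M w0 th0 w1 th1 (u : 'rV[R]_d) (b : 'rV[R]_n) :
  pa2_step_const <= M ->
  pa2_step C x yl yr w0 th0 w1 th1 -> feasible u b 0 ->
  \sum_(j < n) loss w0 th0 j ^+ 2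
  <= M * (sqn (w0 - u) + sqn (th0 - b) - (sqn (w1 - u) + sqn (th1 - b))).
Proof.
move=> le_M [xi [feasible1 minimal1]] feasible_ideal.
have progress := pa2_step_dist_decrease feasible1 feasible_ideal minimal1.
have cost_ge0 : 0 <= sqn (w1 - w0) + sqn (th1 - th0) + 2 * C * slack_cost xi.
  have := mulr_ge0 (ltW C_gt0) (slack_cost_ge0 xi).
  by have := sqn_ge0 (w1 - w0); have := sqn_ge0 (th1 - th0); lra.
have M_ge0 : 0 <= M := le_trans (ltW pa2_step_const_gt0) le_M.
apply: le_trans (pa_loss_sum_le w0 th0 feasible1) _.
exact: le_trans (ler_wpM2r cost_ge0 le_M) (ler_wpM2l M_ge0 progress).
Qed.

End PassiveAggressiveStep.

Lemma pa2_step_const_le (R : realType) d K (C : R) (x : 'rV[R]_d) yl yr (R2 : R) c :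
  (0 < yl <= yr)%N -> (yr <= K)%N -> sqn x <= R2 -> (c <= yr - yl)%N ->
  pa2_step_const K.-1 C x yl yr <= 1 + (2 * C)^-1 + R2 * (K%:R - c%:R - 1).
Proof.
move=> yl_ok yr_le sqn_le c_le.
rewrite /pa2_step_const card_inI //; last by rewrite prednK //; lia.
have : ((K.-1 - (yr - yl))%N%:R <= K%:R - c%:R - 1 :> R).
  by rewrite !lerBrDr natr1 -natrD ler_nat; lia.
by rewrite lerD2l; apply: ler_pM; rewrite ?sqn_ge0 ?ler0n.
Qed.

Theorem corollary3 (R : realType) (d K T : nat) (C : R)
  (x : nat -> 'rV[R]_d) (yl yr : nat -> nat)
  (w : nat -> 'rV[R]_d) (th : nat -> 'rV[R]_(K.-1))
  (u : 'rV[R]_d) (b : 'rV[R]_(K.-1)) :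
  (0 < T)%N -> 0 < C ->
  (forall t, (t < T)%N -> [/\ (1 <= yl t)%N, (yl t <= yr t)%N & (yr t <= K)%N]) ->
  w 0%N = 0 -> th 0%N = 0 ->
  (forall t, (t < T)%N ->
     pa2_step C (x t) (yl t) (yr t) (w t) (th t) (w t.+1) (th t.+1)) ->
  (forall t, (t < T)%N -> forall j : 'I_(K.-1),
     ((j.+1 < yl t)%N -> 1 <= dot u (x t) - b 0 j) /\
     ((yr t <= j.+1)%N -> dot u (x t) - b 0 j <= -1)) ->
  let c := \big[minn/K]_(t < T) (yr t - yl t)%N in
  let R2 := \big[Num.max/0]_(t < T) sqn (x t) in
  \sum_(t < T) \sum_(j < K.-1) (pa_loss (w t) (th t) (x t) (yl t) (yr t) j) ^+ 2
  <= (1 + (2 * C)^-1 + R2 * (K%:R - c%:R - 1)) * (sqn u + sqn b).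
Proof.
move=> T_gt0 C_gt0 labels w_0 th_0 steps ideal; cbv zeta.
set c := \big[minn/K]_(t < T) _; set R2 := \big[Num.max/0]_(t < T) _.
set M := 1 + _ + _; set dist := fun t => sqn (w t - u) + sqn (th t - b).
have M_bound t : (t < T)%N -> pa2_step_const K.-1 C (x t) (yl t) (yr t) <= M.
  move=> t_lt; have [yl_gt0 yl_le yr_le] := labels t t_lt.
  apply: pa2_step_const_le; rewrite ?yl_gt0 //.
    exact: (le_bigmax _ (fun i : 'I_T => sqn (x i)) (Ordinal t_lt)).
  by have := bigmin_le K (Ordinal t_lt) (fun i : 'I_T => yr i - yl i)%N; rewrite minEnat.
have step t : (t < T)%N ->
    \sum_(j < K.-1) pa_loss (w t) (th t) (x t) (yl t) (yr t) j ^+ 2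
    <= M * (dist t - dist t.+1).
  move=> t_lt; have ideal_t : pa2_feasible (x t) (yl t) (yr t) u b 0.
    by move=> j; rewrite mxE subr0 addr0; exact: ideal.
  exact: (pa2_step_loss_le C_gt0 (M_bound t t_lt) (steps t t_lt) ideal_t).
have M_ge0 : 0 <= M.
  exact: le_trans (ltW (pa2_step_const_gt0 _ _ _ _ C_gt0)) (M_bound 0%N T_gt0).
have telescoped : \sum_(t < T) (dist t - dist t.+1) = dist 0%N - dist T.
  rewrite -(big_mkord xpredT (fun t => dist t - dist t.+1)) -opprB -telescope_sumr //.
  by rewrite -sumrN; apply: eq_bigr => t _; rewrite opprB.
apply: (@le_trans _ _ (\sum_(t < T) M * (dist t - dist t.+1))).
  by apply: ler_sum => t _; apply: step.
rewrite -mulr_sumr telescoped ler_wpM2l // /dist w_0 th_0 !sub0r !sqnN gerDl oppr_le0.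
by rewrite addr_ge0 ?sqn_ge0.
Qed.
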